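(* Let $r\ge 2$ be an integer, let $\varphi$ be an instance of 2-Clause 3-SAT, and let $G(\varphi)$ be the graph constructed from $\varphi$ and $r$ as described in the context. If $\mathrm{col}_r(G(\varphi)) \leq 6$, then $\varphi$ has a satisfying assignment.
   Context: 2-Clause 3-SAT: given a CNF formula $\varphi$ with clauses $c_1,\dots,c_m$ over variables $x_1,\dots,x_n$ in which each clause contains at most 3 literals and each literal ($x_j$ or $\overline{x}_j$) appears in exactly 2 clauses, decide whether $\varphi$ is satisfiable. It is assumed throughout that no variable appears twice in a single clause and there are no single-literal clauses (so each clause has 2 or 3 literals). An $\ell$-subdivided edge between $a$ and $b$ is an induced path with $\ell$ internal vertices (subdivision vertices) joining $a$ and $b$, whose internal vertices have no other neighbors. Construction of $G(\varphi)$: for each clause $c_i$ create a vertex $u_i$. For each variable $x_j$ create two vertices $v_j,v'_j$ (for literals $x_j$, $\overline{x}_j$) joined by an edge. For each clause $c_i$ containing literal $x_j$ (resp. $\overline{x}_j$), join $u_i$ and $v_j$ (resp. $v'_j$) by an $(r-1)$-subdivided edge. Add a 7-clique on new vertices $w_1,\dots,w_7$. For each clause $c_i$ add edges from $u_i$ to $w_1,\dots,w_4$, and if $c_i$ has only 2 literals also an edge from $u_i$ to $w_5$. For each variable $x_j$ add edges from $v_j$ to $w_2,w_3,w_4$ and from $v'_j$ to $w_5,w_6,w_7$. Coloring numbers: for a graph $G=(V,E)$ and a total order $\sigma$ of $V$, a vertex $v\neq u$ is $r$-reachable from $u$ if $u<_\sigma v$ and there is a $u$–$v$ path of length at most $r$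 all of whose vertices other than $u,v$ precede $u$ in $\sigma$; $\mathrm{reach}_r(u,G_\sigma)$ is the set of such $v$, and $\mathrm{col}_r(G)=\min_\sigma\max_u|\mathrm{reach}_r(u,G_\sigma)|$ over all total orders $\sigma$ of $V$. *)

From mathcomp Require Import all_boot fingroup perm.
Set Implicit Arguments. Unset Strict Implicit. Unset Printing Implicit Defensive.

(* a literal is a pair (b, j) : bool * 'I_n, standing for x_j if b is  *)
(* true and for the negation of x_j if b is false.                     *)

Definition literal (n : nat) := (bool * 'I_n)%type.

Definition two_clause_3sat (n m : nat) (cl : 'I_m -> seq (literal n)) : Prop :=
  (forall i : 'I_m, 2 <= size (cl i) <= 3) /\
  (forall i : 'I_m, uniq (map snd (cl i))) /\
  (forall (j : 'I_n) (b : bool), #|[set i : 'I_m | (b, j) \in cl i]| = 2).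

Definition satisfiable (n m : nat) (cl : 'I_m -> seq (literal n)) : Prop :=
  exists a : 'I_n -> bool, forall i : 'I_m, has (fun l : literal n => a l.2 == l.1) (cl i).

(* A total order sigma of V is represented by a permutation s of V:    *)
(* x <_s y iff the rank of s x in enum V is smaller than that of s y.  *)
(* Every total order of V arises in this way.                          *)

Definition ord_lt (V : finType) (s : {perm V}) (x y : V) : bool :=
  (enum_rank (s x) < enum_rank (s y))%N.

Definition reach (V : finType) (e : rel V) (r : nat) (s : {perm V}) (u : V)
  : {set V} :=
  [set v | ord_lt s u v &&
     [exists k : 'I_r.+1, exists p : k.-tuple V,
        [&& path e u p, last u p == v &
            all (fun x => ord_lt s x u) (behead (belast u p))]]].

Definition col (V : finType) (e : rel V) (r : nat) : nat :=
  \big[minn/#|V|]_(s : {perm V}) \max_(u : V) #|reach e r s u|.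

(*   U i          -- u_i for clause i                                  *)
(*   L j true     -- v_j  (literal x_j)                                *)
(*   L j false    -- v'_j (literal ~x_j)                               *)
(*   S (i,k,t)    -- the t-th (t < r-1) subdivision vertex of the      *)
(*                   (r-1)-subdivided edge from u_i to the vertex of   *)
(*                   the k-th literal of clause i (k < size (cl i))    *)
(*   W k          -- w_{k+1}, k < 7                                    *)

Definition subdiv_t (n m r : nat) (cl : 'I_m -> seq (literal n)) :=
  {x : 'I_m * 'I_3 * 'I_r.-1 | (x.1.2 < size (cl x.1.1))%N}.

Definition gvert (n m r : nat) (cl : 'I_m -> seq (literal n)) : finType :=
  ((('I_m + ('I_n * bool)) + subdiv_t r cl) + 'I_7)%type.

Section Graph.
Variables (n m r : nat) (cl : 'I_m -> seq (literal n)).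

Definition gU (i : 'I_m) : gvert r cl := inl (inl (inl i)).
Definition gL (j : 'I_n) (b : bool) : gvert r cl := inl (inl (inr (j, b))).
Definition gS (x : subdiv_t r cl) : gvert r cl := inl (inr x).
Definition gW (k : 'I_7) : gvert r cl := inr k.

Definition litv (l : literal n) : gvert r cl := gL l.2 l.1.

(* one orientation of every edge *)
Definition gadj0 (x y : gvert r cl) : bool :=
  match x, y with
  | inr k, inr k' => (k < k')%N
  (* u_i -- w_1..w_4, and w_5 if c_i has 2 literals *)
  | inl (inl (inl i)), inr k =>
      (k < 4)%N || ((k == 4 :> nat) && (size (cl i) == 2))
  (* v_j -- w_2, w_3, w_4 ; v'_j -- w_5, w_6, w_7 *)
  | inl (inl (inr (j, b))), inr k =>
      if b then (1 <= k <= 3)%N else (4 <= k)%N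
  | inl (inl (inr (j, true))), inl (inl (inr (j', false))) => j == j'
  | inl (inl (inl i)), inl (inr x) => ((val x).1.1 == i) && ((val x).2 == 0 :> nat)
  | inl (inr x), inl (inr y) => ((val x).1 == (val y).1) && ((val y).2 == (val x).2.+1 :> nat)
  | inl (inr x), inl (inl (inr (j, b))) =>
      ((val x).2 == r.-2 :> nat) && (onth (cl (val x).1.1) (val x).1.2 == Some (b, j))
  | _, _ => false
  end.

Definition gadj : rel (gvert r cl) := fun x y => gadj0 x y || gadj0 y x.

End Graph.

Arguments gadj {n m} r cl : rename.

From mathcomp Require Import all_boot fingroup perm zify.
Set Implicit Arguments. Unset Strict Implicit. Unset Printing Implicit Defensive.

(* Fix an order in which every r-reach set has at most 6 elements and let w be
   the least vertex of the 7-clique. The six other clique vertices lie in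
   reach(w), so nothing else is r-reachable from w: every non-clique vertex at
   distance at most 2 from w (through a non-clique vertex) precedes w.
   Set x_j true iff v_j precedes v'_j, so that a literal is false iff its
   vertex comes after the vertex of its complement. Such a vertex z cannot
   precede both w and its clause vertex u_i: walking back along the subdivided
   edge to u_i, z reaches a non-clique vertex, and it reaches w_2, ..., w_7
   either directly or through its complement. Now if u_i precedes w, the
   7 - |c_i| clique neighbours of u_i are r-reachable from u_i, so one of its
   subdivided edges has no vertex after u_i and its literal vertex lies below
   u_i < w. If w precedes u_i, then w is not adjacent to u_i, hence it is one
   of w_5, w_6, w_7, and all literal vertices precede w. Either way a clause
   with only false literals is impossible. *)

Section Reach.
Variables (V : finType) (e : rel V) (r : nat) (s : {perm V}).
Local Notation lt := (ord_lt s).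
Local Notation R := (reach e r s).

Lemma ord_lt_trans x y z : lt x y -> lt y z -> lt x z.
Proof. exact: ltn_trans. Qed.

Lemma ord_lt_asym x y : lt x y -> lt y x = false.
Proof. by rewrite /ord_lt => lt_xy; apply/negbTE; rewrite -leqNgt ltnW. Qed.

Lemma ord_ltNge x y : x != y -> ~~ lt x y -> lt y x.
Proof.
move=> neq_xy; rewrite /ord_lt -leqNgt leq_eqVlt => /orP[/eqP eq_rk|//].
by case/eqP: neq_xy; apply/(@perm_inj _ s)/enum_rank_inj/val_inj.
Qed.

Lemma path_in_reach u q v : path e u (rcons q v) -> size q < r ->
  all (lt^~ u) q -> lt u v -> v \in R u.
Proof.
move=> pth size_q below_q lt_uv; rewrite inE lt_uv /=.
have size_p : size (rcons q v) < r.+1 by rewrite size_rcons.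
apply/existsP; exists (Ordinal size_p); apply/existsP; exists (in_tuple (rcons q v)).
by rewrite /= pth last_rcons eqxx belast_rcons.
Qed.

Lemma adj_in_reach u v : 0 < r -> e u v -> lt u v -> v \in R u.
Proof. by move=> r_gt0 e_uv; apply: (@path_in_reach u [::]) => //=; rewrite e_uv. Qed.

Lemma adj2_in_reach u x v : 1 < r -> e u x -> e x v -> lt x u -> lt u v -> v \in R u.
Proof.
move=> r_gt1 e_ux e_xv lt_xu.
by apply: (@path_in_reach u [:: x]) => //=; rewrite ?e_ux ?e_xv ?lt_xu.
Qed.

Definition first_above u p := nth u p (find (lt u) p).

Lemma mem_first_above u p : has (lt u) p -> first_above u p \in p.
Proof. by rewrite has_find; apply: mem_nth. Qed.

(* All vertices of [p] before the first one above [u] lie below [u]. *)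
Lemma first_above_reach u p : path e u p -> size p <= r -> u \notin p ->
  has (lt u) p -> first_above u p \in R u.
Proof.
move=> pth size_p u_notin hasp; have find_lt := hasp; rewrite has_find in find_lt.
apply: (@path_in_reach u (take (find (lt u) p) p)).
- by rewrite -take_nth // take_path.
- by rewrite size_take find_lt; apply: leq_trans find_lt size_p.
- apply/allP => x x_take; apply: ord_ltNge.
    by apply: (contraNneq _ u_notin) => ->; apply: mem_take x_take.
  by have := has_take (find (lt u) p) hasp; rewrite ltnn => /hasPn; apply.
- exact: nth_find.
Qed.

Lemma size_le_reach u xs : uniq xs -> {subset xs <= R u} -> size xs <= #|R u|.
Proof. by move=> /card_uniqP <- sub_xs; apply/subset_leq_card/subsetP. Qed.

End Reach.

Lemma col_leq_witness (V : finType) (e : rel V) r c : col e r <= c -> c < #|V| ->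
  exists s : {perm V}, forall u, #|reach e r s u| <= c.
Proof.
move=> col_le c_lt; suff [s max_le] : exists s : {perm V}, \max_u #|reach e r s u| <= c.
  by exists s => u; apply: leq_trans max_le; apply: leq_bigmax.
move: col_le; rewrite /col.
elim/big_ind: _ => [|x y IHx IHy|s _ ?]; last by exists s.
- by rewrite leqNgt c_lt.
- by rewrite geq_min => /orP[/IHx|/IHy].
Qed.

Lemma path_map_iota (T : Type) (e : rel T) (f : nat -> T) a N :
  (forall t, a <= t < a + N -> e (f t) (f t.+1)) -> path e (f a) (map f (iota a.+1 N)).
Proof.
elim: N a => [|N IH] a adj_f //=; rewrite adj_f ?leqnn ?addnS ?ltnS ?leq_addr //=.
by apply: IH => t /andP[a_lt t_lt]; apply: adj_f; rewrite ltnW // addnS -addSn t_lt.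
Qed.

Lemma last_map_iota (T : Type) (f : nat -> T) a N :
  last (f a) (map f (iota a.+1 N)) = f (a + N).
Proof. by elim: N a => [|N IH] a /=; rewrite ?addn0 // IH addSnnS. Qed.

Lemma onth_nth_index (T : eqType) (s : seq T) x : x \in s -> onth s (index x s) = Some x.
Proof. by elim: s => //= y s IH; rewrite inE eq_sym; case: eqP => [->|_] //=. Qed.

Section Graph.
Variables (n m r' : nat) (cl : 'I_m -> seq (literal n)).
Local Notation r := r'.+2.
Local Notation V := (gvert r cl).
Local Notation e := (gadj r cl).
Local Notation U := (gU r cl).
Local Notation L := (gL r cl).
Local Notation W := (gW r cl).
Local Notation litv := (litv r cl).

Definition isW (x : V) : bool := if x is inr _ then true else false.

Lemma gadj_sym : symmetric e.
Proof. by move=> x y; rewrite /gadj orbC. Qed.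

Lemma adj_U_W i (k : 'I_7) : 2 <= size (cl i) -> k + size (cl i) < 7 -> e (U i) (W k).
Proof. by rewrite /gadj /=; lia. Qed.

Lemma adj_L_neg j b : e (L j b) (L j (~~ b)).
Proof. by case: b; rewrite /gadj /= eqxx ?orbT. Qed.

(* [ord0] stands for [w_1], the clique vertex adjacent to no literal vertex. *)
Lemma adj_L_W j b (k : 'I_7) : k != ord0 -> e (L j b) (W k) || e (L j (~~ b)) (W k).
Proof. by case: b; case: k => [[|[|[|[|[|[|[|k]]]]]]] ?]. Qed.

Lemma adj_W_W (k k' : 'I_7) : k != k' -> e (W k) (W k').
Proof. by rewrite /gadj /= -neq_ltn. Qed.

Lemma adj_W_U (k : 'I_7) i : k < 4 -> e (W k) (U i).
Proof. by rewrite /gadj /= => ->. Qed.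

Lemma adj_W_Lneg (k : 'I_7) j : 3 < k -> e (W k) (L j false).
Proof. by rewrite /gadj /= => ->. Qed.

Lemma litv_inj : injective litv.
Proof. by move=> [b j] [b' j'] [-> ->]. Qed.

(* [u_i] itself is the junk value for out-of-range [k].                       *)
Definition subv (i : 'I_m) (k t : nat) : V :=
  odflt (U i) (omap (@gS n m r cl) (insub ((i, inord k, inord t) : 'I_m * 'I_3 * 'I_r.-1))).

Lemma subvE i k t : k < size (cl i) -> k < 3 -> t <= r' ->
  exists2 x : subdiv_t r cl, subv i k t = gS x & val x = (i, inord k, inord t).
Proof.
move=> k_lt k_lt3 t_le; rewrite /subv; case: insubP => [x _ <-|] /=; first by exists x.
by rewrite inordK // k_lt.
Qed.

Definition inner (i : 'I_m) (y : literal n) : seq V :=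
  [seq subv i (index y (cl i)) t | t <- iota 0 r'.+1].

Definition spoke (i : 'I_m) (y : literal n) : seq V := rcons (inner i y) (litv y).

Section Spokes.
Hypothesis cl_size3 : forall i, size (cl i) <= 3.

Lemma inner_subdiv i y x : y \in cl i -> x \in inner i y ->
  exists2 z, x = gS z & (val z).1 = (i, inord (index y (cl i))).
Proof.
move=> y_in /mapP[t]; rewrite mem_iota => /andP[_ t_lt] ->.
have y_idx : index y (cl i) < size (cl i) by rewrite index_mem.
have [z -> val_z] := subvE y_idx (leq_trans y_idx (cl_size3 i)) t_lt.
by exists z; rewrite ?val_z.
Qed.

Lemma size_spoke i y : size (spoke i y) = r.
Proof. by rewrite size_rcons size_map size_iota. Qed.

Lemma path_spoke i y : y \in cl i -> path e (U i) (spoke i y).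
Proof.
move=> y_in; have y_idx : index y (cl i) < size (cl i) by rewrite index_mem.
have y_idx3 := leq_trans y_idx (cl_size3 i).
have subv_adj t : t < r' -> e (subv i (index y (cl i)) t) (subv i (index y (cl i)) t.+1).
  move=> t_lt; have [x -> val_x] := subvE y_idx y_idx3 (ltnW t_lt).
  have [x' -> val_x'] := subvE y_idx y_idx3 t_lt.
  by rewrite /gadj /= val_x val_x' /= eqxx !inordK //= ?eqxx //; lia.
rewrite rcons_path /= path_map_iota => [|t /andP[_ t_lt]]; last exact: subv_adj.
rewrite last_map_iota add0n; apply/andP; split.
  have [x0 -> val_x0] := subvE y_idx y_idx3 (leq0n r').
  by rewrite /gadj /= val_x0 /= eqxx inordK.
have [x -> val_x] := subvE y_idx y_idx3 (leqnn r').
rewrite /gadj /= val_x /= inordK // eqxx /= inordK //.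
by rewrite (onth_nth_index y_in) -surjective_pairing eqxx.
Qed.

Lemma inner_nonW i y x : y \in cl i -> x \in inner i y -> ~~ isW x.
Proof. by move=> y_in /(inner_subdiv y_in)[z ->]. Qed.

Lemma litv_notin_inner i y z : y \in cl i -> litv z \notin inner i y.
Proof. by move=> y_in; apply/negP => /(inner_subdiv y_in)[]. Qed.

Lemma U_notin_spoke i y : y \in cl i -> U i \notin spoke i y.
Proof.
move=> y_in; rewrite mem_rcons inE; apply/norP; split=> //.
by apply/negP => /(inner_subdiv y_in)[].
Qed.

Lemma spoke_nonW i y x : y \in cl i -> x \in spoke i y -> ~~ isW x.
Proof. by move=> y_in; rewrite mem_rcons inE => /orP[/eqP-> //|]; apply: inner_nonW. Qed.

Lemma spoke_disjoint i y y' x : y \in cl i -> y' \in cl i ->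
  x \in spoke i y -> x \in spoke i y' -> y = y'.
Proof.
move=> y_in y'_in; rewrite !mem_rcons !inE.
case/orP=> [/eqP-> | /(inner_subdiv y_in)[z -> val_z]] /orP[].
- by move/eqP/litv_inj.
- by case/(inner_subdiv y'_in).
- by move/eqP.
case/(inner_subdiv y'_in) => _ [<-]; rewrite val_z => -[/(congr1 val)].
have idx3 w : w \in cl i -> index w (cl i) < 3.
  by move=> w_in; apply: leq_trans (cl_size3 i); rewrite index_mem.
by rewrite /= !inordK ?idx3 //; apply: index_inj.
Qed.

Section OrderWithSmallReach.
Hypotheses (cl_size2 : forall i, 1 < size (cl i)) (cl_uniq : forall i, uniq (cl i)).
Variable s : {perm V}.
Hypothesis reach_le6 : forall u, #|reach e r s u| <= 6.
Local Notation lt := (ord_lt s).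
Local Notation R := (reach e r s).

Lemma size_in_reach_lt7 u xs : uniq xs -> {subset xs <= R u} -> size xs < 7.
Proof. by move=> uniq_xs sub_xs; apply: leq_trans (size_le_reach uniq_xs sub_xs) _. Qed.

Lemma not_reach_nonW_six_W u x k0 : ~~ isW x -> x \in R u ->
  (forall k, k != k0 -> W k \in R u) -> False.
Proof.
move=> nonW_x x_in W_in; pose xs := x :: map W (rem k0 (enum 'I_7)).
have k_neq k : k \in rem k0 (enum 'I_7) -> k != k0.
  by rewrite mem_rem_uniq ?enum_uniq // inE => /andP[].
have : size xs < 7.
  apply: (@size_in_reach_lt7 u) => [|v].
    rewrite /= map_inj_uniq => [|? ? [] //]; rewrite rem_uniq ?enum_uniq ?andbT //.
    by apply/mapP => -[k _ eq_xW]; rewrite eq_xW in nonW_x.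
  by rewrite inE => /orP[/eqP-> //|/mapP[k /k_neq /W_in W_k ->]].
by rewrite /= size_map size_rem ?mem_enum // size_enum_ord.
Qed.

Definition kmin : 'I_7 := [arg min_(k < ord0) enum_rank (s (W k))].
Local Notation wmin := (W kmin).

Lemma wmin_lt k : k != kmin -> lt wmin (W k).
Proof.
rewrite /kmin; case: arg_minnP => // k0 _ min_k0 k_neq.
apply: ord_ltNge; first by apply: contra k_neq => /eqP[->].
by rewrite /ord_lt -leqNgt min_k0.
Qed.

Lemma lt_wmin_W x k : lt x wmin -> lt x (W k).
Proof.
case: (eqVneq k kmin) => [-> //|/wmin_lt lt_wk lt_xw].
exact: ord_lt_trans lt_xw lt_wk.
Qed.

Lemma nonW_notin_reach_wmin x : ~~ isW x -> x \notin R wmin.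
Proof.
move=> nonW_x; apply/negP => x_in.
apply: (not_reach_nonW_six_W (k0 := kmin) nonW_x x_in) => k k_neq.
by apply: adj_in_reach _ (adj_W_W _) (wmin_lt k_neq); rewrite // eq_sym.
Qed.

Lemma adj_wmin_lt x : ~~ isW x -> e wmin x -> lt x wmin.
Proof.
move=> nonW_x e_wx; apply: ord_ltNge; first by apply: contraNneq nonW_x => <-.
by apply: contra (nonW_notin_reach_wmin nonW_x); apply: adj_in_reach.
Qed.

Lemma adj2_wmin_lt x y : ~~ isW x -> ~~ isW y -> e wmin x -> e x y -> lt y wmin.
Proof.
move=> nonW_x nonW_y e_wx e_xy; apply: ord_ltNge; first by apply: contraNneq nonW_y => <-.
apply: contra (nonW_notin_reach_wmin nonW_y).
exact: adj2_in_reach (adj_wmin_lt nonW_x e_wx).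
Qed.

Lemma false_literal_not_low i y : y \in cl i -> lt (L y.2 (~~ y.1)) (litv y) ->
  lt (litv y) wmin -> lt (litv y) (U i) -> False.
Proof.
move=> y_in lt_neg lt_w lt_U; pose q := rev (belast (U i) (spoke i y)).
have q_inner : q = rev (U i :: inner i y) by rewrite /q belast_rcons.
have pth : path e (litv y) q.
  rewrite -{1}(last_rcons (U i) (inner i y) (litv y)) rev_path.
  by rewrite (eq_path (e' := e)) ?path_spoke // => a b; rewrite gadj_sym.
have size_q : size q <= r by rewrite size_rev size_belast size_spoke.
have notin_q : litv y \notin q by rewrite q_inner mem_rev inE litv_notin_inner.
have has_q : has (lt (litv y)) q.
  by apply/hasP; exists (U i); rewrite // q_inner mem_rev mem_head.
have first_in : first_above s (litv y) q \in q by apply: mem_first_above.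
have nonW_first : ~~ isW (first_above s (litv y) q).
  by move: first_in; rewrite q_inner mem_rev inE => /orP[/eqP-> //|]; apply: inner_nonW.
have first_reach := first_above_reach pth size_q notin_q has_q.
apply: (not_reach_nonW_six_W (k0 := ord0) nonW_first first_reach) => k.
move=> /(adj_L_W y.2 y.1)/orP[e_yk | e_nk].
  exact: adj_in_reach _ e_yk (lt_wmin_W _ lt_w).
exact: adj2_in_reach _ (adj_L_neg y.2 y.1) e_nk lt_neg (lt_wmin_W _ lt_w).
Qed.

Lemma literals_below_wmin i : lt wmin (U i) -> forall j b, lt (L j b) wmin.
Proof.
move=> lt_wU j b; have [kmin_lt4 | kmin_ge4] := ltnP kmin 4.
  by have := @adj_wmin_lt (U i) isT (adj_W_U i kmin_lt4); rewrite ord_lt_asym.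
have e_wneg := adj_W_Lneg j kmin_ge4.
case: b; last exact: adj_wmin_lt.
exact: (@adj2_wmin_lt (L j false) (L j true) isT isT e_wneg (adj_L_neg j false)).
Qed.

Lemma low_clause_has_low_literal i :
  lt (U i) wmin -> exists2 y, y \in cl i & lt (litv y) (U i).
Proof.
move=> lt_Uw.
have [all_high | /allPn[y y_in low]] :=
  boolP (all (fun y => has (lt (U i)) (spoke i y)) (cl i)).
  exfalso.
  have first_in y : y \in cl i -> first_above s (U i) (spoke i y) \in spoke i y.
    by move=> y_in; apply/mem_first_above/(allP all_high).
  pose xs := [seq first_above s (U i) (spoke i y) | y <- cl i].
  pose ws := [seq W (inord k) | k <- iota 0 (7 - size (cl i))].
  have : size (ws ++ xs) < 7.
    apply: (@size_in_reach_lt7 (U i)) => [|x].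
      rewrite cat_uniq; apply/and3P; split.
      - rewrite map_inj_in_uniq ?iota_uniq // => a b; rewrite !mem_iota.
        by move=> /andP[_ a_lt] /andP[_ b_lt] [/(congr1 val)]; rewrite /= !inordK //; lia.
      - apply/hasPn => _ /mapP[y y_in ->]; apply/mapP => -[k _ eq_W].
        by have := spoke_nonW y_in (first_in y y_in); rewrite eq_W.
      - rewrite map_inj_in_uniq ?cl_uniq // => y y' y_in y'_in eq_first.
        by apply: (spoke_disjoint y_in y'_in (first_in y y_in)); rewrite eq_first first_in.
    rewrite mem_cat => /orP[/mapP[k k_in ->] | /mapP[y y_in ->]].
      apply: adj_in_reach _ (adj_U_W (cl_size2 i) _) (lt_wmin_W _ lt_Uw) => //.
      by move: k_in; rewrite mem_iota => k_in; rewrite inordK; lia.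
    apply: first_above_reach (path_spoke y_in) _ (U_notin_spoke y_in) (allP all_high y y_in).
    by rewrite size_spoke.
  by rewrite size_cat !size_map size_iota subnK ?ltnn // (leq_trans (cl_size3 i)).
exists y => //; apply: ord_ltNge.
  by apply: contraNneq (U_notin_spoke y_in) => ->; rewrite mem_rcons mem_head.
by apply: contra low => lt_Uy; apply/hasP; exists (litv y); rewrite // mem_rcons mem_head.
Qed.

Definition order_assignment (j : 'I_n) : bool := lt (L j true) (L j false).

Lemma false_literal_above_neg y :
  order_assignment y.2 != y.1 -> lt (L y.2 (~~ y.1)) (litv y).
Proof.
case: y => [[] j]; rewrite /order_assignment /=; last by case: lt.
by move=> not_lt; apply: ord_ltNge; [apply/eqP => -[] | case: lt not_lt].
Qed.

Lemma clause_satisfied i : has (fun y => order_assignment y.2 == y.1) (cl i).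
Proof.
apply/negPn/negP => /hasPn all_false.
have lit_false y : y \in cl i -> lt (L y.2 (~~ y.1)) (litv y).
  by move=> y_in; apply/false_literal_above_neg/all_false.
have [lt_Uw | not_lt_Uw] := boolP (lt (U i) wmin).
  have [y y_in lt_yU] := low_clause_has_low_literal lt_Uw.
  exact: false_literal_not_low y_in (lit_false y y_in) (ord_lt_trans lt_yU lt_Uw) lt_yU.
have lt_wU : lt wmin (U i) by apply: ord_ltNge.
have [y y_in] : exists y, y \in cl i.
  by case: (cl i) (cl_size2 i) => // y ys _; exists y; apply: mem_head.
have lt_yw := literals_below_wmin lt_wU y.2 y.1.
exact: false_literal_not_low y_in (lit_false y y_in) lt_yw (ord_lt_trans lt_yw lt_wU).
Qed.
End OrderWithSmallReach.
End Spokes.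
End Graph.

Theorem lemma3p15 (r n m : nat) (cl : 'I_m -> seq (literal n)) :
  (2 <= r)%N ->
  two_clause_3sat cl ->
  (col (gadj r cl) r <= 6)%N ->
  satisfiable cl.
Proof.
case: r => [|[|r']] // _ [cl_size [cl_var_uniq _]] col_le.
have card_V : 6 < #|gvert r'.+2 cl|.
  by rewrite -[7]card_ord; apply: (@leq_card _ _ (gW r'.+2 cl)) => ? ? [].
have [s reach_le6] := col_leq_witness col_le card_V.
have cl_size3 i : size (cl i) <= 3 by case/andP: (cl_size i).
have cl_size2 i : 1 < size (cl i) by case/andP: (cl_size i).
have cl_uniq i : uniq (cl i) := map_uniq (cl_var_uniq i).
exists (order_assignment s).
exact: clause_satisfied cl_size3 cl_size2 cl_uniq _ reach_le6.
Qed.
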